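(* Let $F$ be a finitely generated group whose commutator subgroup has infinite index in $F$, and let $G$ be an arbitrary group. Then the number of surjective homomorphisms $F\to G$ is divisible by the order $|G'|$ of the commutator subgroup of $G$.
   Context: Groups need not be finite; divisibility is understood in the sense of cardinal arithmetic: an infinite cardinal is divisible by every nonzero cardinal not exceeding it. *)

(* possibly infinite groups are [groupType]s from
   mathcomp/boot/monoid.v (carrier with a group law; the carrier is a
   choiceType, which is harmless classically). *)
From mathcomp Require Import all_boot.
From mathcomp Require Import monoid.

Set Implicit Arguments.
Unset Strict Implicit.
Unset Printing Implicit Defensive.

Definition is_subgroup (G : groupType) (H : G -> Prop) : Prop :=
  [/\ H one,
      forall x y, H x -> H y -> H (mul x y)
    & forall x, H x -> H (inv x)].

Definition generated (G : groupType) (S : G -> Prop) : G -> Prop :=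
  fun x => forall H : G -> Prop, is_subgroup H -> (forall s, S s -> H s) -> H x.

Definition derived (G : groupType) : G -> Prop :=
  generated (fun z : G => exists x y, z = commg x y).

Definition finitely_generated (G : groupType) : Prop :=
  exists s : seq G, forall x : G, generated (fun y => y \in s) x.

Definition finite_index (G : groupType) (H : G -> Prop) : Prop :=
  exists reps : seq G, forall x : G, exists2 r, r \in reps & H (mul (inv r) x).

Definition SurjHom (F G : groupType) : Type :=
  {f : F -> G | monoid_morphism f /\ (forall y : G, exists x : F, f x = y)}.

Definition DerivedSet (G : groupType) : Type := {x : G | derived x}.

(* Cardinal divisibility: |A| divides |B| iff |B| = |A| * |C| for some
   cardinal |C|, i.e. B is in bijection with A * C for some set C. *)
Definition card_divides (A B : Type) : Prop :=
  exists (C : Type) (f : A * C -> B), bijective f.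

(** Because F is finitely generated and F' has infinite index, the abelian
    group F/F' is infinite, so F has a homomorphism psi onto Z; pick t with
    psi t = 1 and let K = ker psi, so that a homomorphism on F is determined
    by its restriction to K and its value at t.  For a surjection f : F -> G
    the subgroup N = f(K) is normal and contains G', because G/N is cyclic.
    Call f' equivalent to f when f' agrees with f^n on K for some n in N and
    f'(t) lies in N f(t).  The equivalence class of f consists of the maps
    (f twisted by z)^r, where the twist by z in Z(N) agrees with f on K and
    sends t to f(t) z, and r in N; here r is determined modulo Z(N) and then
    z is determined.  Choosing coset representatives of Z(N) in N, the class
    is in bijection with N, hence with G' x N/G', and choosing one surjection
    in each class exhibits SurjHom(F, G) as G' x C for some set C. *)

From mathcomp Require Import all_boot.
From mathcomp Require Import monoid.
From Stdlib Require Import ZArith Lia Setoid Morphisms Wf_nat.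
From Stdlib Require Import ClassicalEpsilon FunctionalExtensionality.
From Stdlib Require Import PropExtensionality ProofIrrelevance Classical.

Set Implicit Arguments.
Unset Strict Implicit.
Unset Printing Implicit Defensive.

Local Open Scope group_scope.

Section IntegerPowers.
Variable G : groupType.
Implicit Types x : G.

Definition zpow x (n : Z) : G :=
  if (0 <=? n)%Z then x ^+ Z.to_nat n else x^-1 ^+ Z.to_nat (- n).

Lemma zpow0 x : zpow x 0 = 1.
Proof. by []. Qed.

Lemma zpow_nat x (k : nat) : zpow x (Z.of_nat k) = x ^+ k.
Proof.
rewrite /zpow; have -> : (0 <=? Z.of_nat k)%Z = true by apply/Z.leb_le; lia.
by rewrite Nat2Z.id.
Qed.

Lemma zpowS x n : zpow x (Z.succ n) = zpow x n * x.
Proof.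
rewrite /zpow; case: (Z.leb_spec 0 n) => n_ge0.
  have -> : (0 <=? Z.succ n)%Z = true by apply/Z.leb_le; lia.
  have -> : Z.to_nat (Z.succ n) = (Z.to_nat n).+1 by lia.
  by rewrite expgSr.
case: (Z.leb_spec 0 (Z.succ n)) => Sn_ge0.
  have -> : n = (-1)%Z by lia.
  by rewrite /= expg1 mulVg.
have -> : Z.to_nat (- n) = (Z.to_nat (- Z.succ n)).+1 by lia.
by rewrite expgSr mulgVK.
Qed.

Lemma zpow_pred x n : zpow x (Z.pred n) = zpow x n * x^-1.
Proof. by rewrite -{2}(Z.succ_pred n) zpowS mulgK. Qed.

Lemma zpow1 x : zpow x 1 = x.
Proof. by rewrite -[1%Z]/(Z.succ 0) zpowS mul1g. Qed.

Lemma zpowD x m n : zpow x (m + n) = zpow x m * zpow x n.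
Proof.
induction n using Z.peano_ind.
- by rewrite Z.add_0_r zpow0 mulg1.
- by rewrite Z.add_succ_r !zpowS IHn mulgA.
- by rewrite Z.add_pred_r !zpow_pred IHn mulgA.
Qed.

Lemma zpowN x n : zpow x (- n) = (zpow x n)^-1.
Proof. by apply: (mulIg (zpow x n)); rewrite -zpowD mulVg Z.add_opp_diag_l. Qed.

Lemma zpowM x m n : zpow x (m * n) = zpow (zpow x m) n.
Proof.
induction n using Z.peano_ind.
- by rewrite Z.mul_0_r.
- by rewrite Z.mul_succ_r zpowD zpowS IHn.
- by rewrite Z.mul_pred_r -Z.add_opp_r zpowD zpowN zpow_pred IHn.
Qed.

Lemma zpowC x m n : commute (zpow x m) (zpow x n).
Proof. by rewrite /commute -!zpowD Z.add_comm. Qed.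

End IntegerPowers.

Section MonoidMorphisms.
Variables (F G : groupType) (f : F -> G).
Hypothesis f_morph : monoid_morphism f.

Lemma mmorph1 : f 1 = 1. Proof. exact: f_morph.1. Qed.
Lemma mmorphM x y : f (x * y) = f x * f y. Proof. exact: f_morph.2. Qed.
Lemma mmorphV x : f x^-1 = (f x)^-1.
Proof. by apply: (mulIg (f x)); rewrite -mmorphM !mulVg mmorph1. Qed.
Lemma mmorphJ x y : f (x ^ y) = f x ^ f y.
Proof. by rewrite /conjg !mmorphM mmorphV. Qed.
Lemma mmorphR x y : f (commg x y) = commg (f x) (f y).
Proof. by rewrite /commg mmorphM mmorphV mmorphJ. Qed.
Lemma mmorphZ x n : f (zpow x n) = zpow (f x) n.
Proof.
induction n using Z.peano_ind.
- by rewrite !zpow0 mmorph1.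
- by rewrite !zpowS mmorphM IHn.
- by rewrite !zpow_pred mmorphM mmorphV IHn.
Qed.

End MonoidMorphisms.

Section Subgroups.
Variable G : groupType.
Implicit Types (H S : G -> Prop) (x y : G).

Lemma subgroup1 H : is_subgroup H -> H 1.
Proof. by case. Qed.

Lemma subgroupM H x y : is_subgroup H -> H x -> H y -> H (x * y).
Proof. by case=> _ + _; apply. Qed.

Lemma subgroupV H x : is_subgroup H -> H x -> H x^-1.
Proof. by case=> _ _; apply. Qed.

Lemma subgroupZ H x n :
  is_subgroup H -> H x -> H (zpow x n).
Proof.
move=> H_sub Hx; induction n using Z.peano_ind; first exact: subgroup1.
  by rewrite zpowS; apply: subgroupM.
by rewrite zpow_pred; apply: subgroupM => //; apply: subgroupV.
Qed.

Lemma generated_mono S S' x :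
  (forall y, S y -> S' y) -> generated S x -> generated S' x.
Proof. by move=> sSS' Sx H H_sub sS'H; apply: Sx => // s /sSS'/sS'H. Qed.

Lemma generated_subgroup S : is_subgroup (generated S).
Proof.
split=> [H [] //|x y Sx Sy H H_sub sSH|x Sx H H_sub sSH].
  by apply: subgroupM; [|apply: Sx|apply: Sy].
by apply: subgroupV; [|apply: Sx].
Qed.

Lemma generated_min S H x :
  is_subgroup H -> (forall s, S s -> H s) -> generated S x -> H x.
Proof. by move=> H_sub sSH /(_ H H_sub sSH). Qed.

Lemma derived_subgroup : is_subgroup (@derived G).
Proof. exact: generated_subgroup. Qed.

Lemma derived_commg x y : derived (commg x y).
Proof. by move=> H _ sH; apply: sH; exists x, y. Qed.

End Subgroups.

Section IntegerValuedHomomorphisms.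
Variable G : groupType.

Definition zhom (psi : G -> Z) := forall x y, psi (x * y) = (psi x + psi y)%Z.

Variable psi : G -> Z.
Hypothesis psiM : zhom psi.

Lemma zhom1 : psi 1 = 0%Z.
Proof. by have := psiM 1 1; rewrite mulg1; lia. Qed.

Lemma zhomV x : psi x^-1 = (- psi x)%Z.
Proof. by have := psiM x^-1 x; rewrite mulVg zhom1; lia. Qed.

Lemma zhomJ x y : psi (x ^ y) = psi x.
Proof. by rewrite /conjg !psiM zhomV; lia. Qed.

Lemma zhomZ x n : psi (zpow x n) = (n * psi x)%Z.
Proof.
induction n using Z.peano_ind.
- by rewrite zpow0 zhom1.
- by rewrite zpowS psiM IHn; lia.
- by rewrite zpow_pred psiM IHn zhomV; lia.
Qed.

End IntegerValuedHomomorphisms.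

(** * A homomorphism onto Z *)

Lemma pigeonhole (T : eqType) (s : seq T) (c : nat -> T) :
  (forall i, c i \in s) -> exists i j, [/\ i < j, j <= size s & c i = c j].
Proof.
move=> cs; have /(uniqPn (c 0)) [i [j [lt_ij]]] : ~~ uniq (mkseq c (size s).+1).
  apply/negP => c_uniq; suff : (size s).+1 <= size s by rewrite ltnn.
  by rewrite -{1}(size_mkseq c (size s).+1) (uniq_leq_size c_uniq) // => _ /mapP [i _ ->].
rewrite size_mkseq ltnS => le_js; rewrite !nth_mkseq ?ltnS ?(ltnW (leq_trans lt_ij le_js)) //.
by exists i, j.
Qed.

Lemma finite_index_expg_fact (G : groupType) (B : G -> Prop) (reps : seq G) x :
  is_subgroup B -> (forall y, exists2 r, r \in reps & B (r^-1 * y)) ->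
  B (x ^+ (size reps)`!).
Proof.
move=> B_sub B_reps.
have [c c_rep] := choice (fun i r => r \in reps /\ B (r^-1 * x ^+ i))
  (fun i => let: ex_intro2 r r_in Br := B_reps (x ^+ i) in ex_intro _ r (conj r_in Br)).
have [i [j [lt_ij le_j ci_cj]]] := pigeonhole (fun i => (c_rep i).1).
have Bxji : B (x ^+ (j - i)).
  have := subgroupM B_sub (subgroupV B_sub (c_rep i).2) (c_rep j).2.
  rewrite ci_cj -[in x ^+ j](subnKC (ltnW lt_ij)) expgnDr.
  by rewrite invgM invgK mulgA mulgK mulKg.
have ji_dvd : (j - i %| (size reps)`!)%nat.
  by apply: dvdn_fact; rewrite subn_gt0 lt_ij (leq_trans (leq_subr _ _)).
by rewrite -(divnK ji_dvd) mulnC expgnA -zpow_nat; apply: subgroupZ.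
Qed.

Section AbelianQuotient.
Variables (G : groupType) (H : G -> Prop).
Hypotheses (H_sub : is_subgroup H) (H_comm : forall x y : G, H (commg x y)).
Implicit Types x y : G.

Definition eqmod x y := H (x * y^-1).

Lemma eqmod1 x : H x <-> eqmod x 1.
Proof. by rewrite /eqmod invg1 mulg1. Qed.

Lemma subgroup_conj x y : H x -> H (x ^ y).
Proof. by move=> Hx; rewrite -[x ^ y](mulVKg x) -/(commg x y); apply: subgroupM. Qed.

Lemma subgroup_rot x y : H (x * y) -> H (y * x).
Proof. by move=> /(subgroup_conj x); rewrite /conjg mulgA mulKg. Qed.

Local Instance eqmod_equiv : Equivalence eqmod.
Proof.
split=> [x|x y|x y z]; rewrite /eqmod.
- by rewrite mulgV; apply: subgroup1.
- by move=> /(subgroupV H_sub); rewrite invgM invgK.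
- by move=> Hxy /(subgroupM H_sub Hxy); rewrite mulgA mulgVK.
Qed.

Local Instance eqmod_mul : Proper (eqmod ==> eqmod ==> eqmod) (@mul G).
Proof.
move=> x x' Hx y y' Hy; rewrite /eqmod invgM.
have -> : x * y * (y'^-1 * x'^-1) = x * (y * y'^-1) * x'^-1 by rewrite !mulgA.
by apply: subgroup_rot; rewrite mulgA; apply: subgroupM => //; apply: subgroup_rot.
Qed.

Local Instance eqmod_inv : Proper (eqmod ==> eqmod) (@inv G).
Proof.
move=> x x' /(subgroupV H_sub); rewrite /eqmod invgM !invgK; exact: subgroup_rot.
Qed.

Lemma eqmodC x y : eqmod (x * y) (y * x).
Proof.
by rewrite /eqmod invgM !mulgA; have := H_comm x^-1 y^-1; rewrite /commg /conjg !invgK !mulgA.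
Qed.

Lemma eqmod_expgMn x y n : eqmod ((x * y) ^+ n) (x ^+ n * y ^+ n).
Proof.
elim: n => [|n IHn]; first by rewrite !expg0 mulg1; reflexivity.
rewrite !expgS IHn -!mulgA; apply: eqmod_mul; first reflexivity.
by rewrite !mulgA; apply: eqmod_mul; [apply: eqmodC|reflexivity].
Qed.

Definition adjoin (a : G) x := exists m, H (x * zpow a m).

Lemma adjoin_subgroup a : is_subgroup (adjoin a).
Proof.
split.
- by exists 0%Z; rewrite mulg1; apply: subgroup1.
- move=> x y [m /eqmod1 Hx] [n /eqmod1 Hy]; exists (m + n)%Z; apply/eqmod1.
  rewrite zpowD -mulgA (mulgA y) (eqmodC y) !mulgA Hx mul1g Hy; reflexivity.
- move=> x [m /eqmod1 Hx]; exists (- m)%Z; apply/eqmod1.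
  by rewrite zpowN eqmodC -invgM Hx invg1; reflexivity.
Qed.

Lemma finite_index_adjoin a p :
  finite_index (adjoin a) -> (0 < p)%nat -> H (a ^+ p) -> finite_index H.
Proof.
move=> [reps adj_reps] p_gt0 Hap.
exists [seq r * a ^+ j | r <- reps, j <- iota 0 p] => x.
have [r r_in [M /eqmod1 HM]] := adj_reps x.
have p_pos : (0 < Z.of_nat p)%Z by move/ltP: p_gt0; lia.
have [j_ge0 j_lt] := Z.mod_pos_bound (- M) (Z.of_nat p) p_pos.
pose j := Z.to_nat ((- M) mod (Z.of_nat p)).
exists (r * a ^+ j).
  by apply: allpairs_f => //; rewrite mem_iota /= add0n; apply/ltP; lia.
have rx_eq : eqmod (r^-1 * x) (zpow a (- M)).
  by rewrite -[r^-1 * x]mulg1 -(mulgV (zpow a M)) mulgA HM mul1g zpowN; reflexivity.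
apply/eqmod1; rewrite invgM -mulgA rx_eq -zpow_nat -zpowN -zpowD.
have -> : (- Z.of_nat j + - M = Z.of_nat p * (- M / Z.of_nat p))%Z.
  by have := Z.div_mod (- M) (Z.of_nat p); rewrite /j Z2Nat.id; lia.
by rewrite zpowM zpow_nat -eqmod1; apply: subgroupZ.
Qed.

Lemma zhom_of_adjoin a :
  finite_index (adjoin a) -> (forall m, H (zpow a m) -> m = 0%Z) ->
  exists2 psi : G -> Z, zhom psi & psi a <> 0%Z.
Proof.
move=> [reps adj_reps] a_free.
have deg_uniq y m m' : H (y * zpow a m) -> H (y * zpow a m') -> m = m'.
  move=> Hm Hm'; have := subgroupM H_sub (subgroupV H_sub Hm) Hm'.
  by rewrite invgM -mulgA mulKg -zpowN -zpowD => /a_free; lia.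
pose E := (size reps)`!.
have adjE y : adjoin a (y ^+ E).
  exact: finite_index_expg_fact (adjoin_subgroup a) adj_reps.
pose deg y := epsilon (inhabits 0%Z) (fun m => H (y ^+ E * zpow a m)).
have degP y : eqmod (y ^+ E * zpow a (deg y)) 1.
  exact: (proj1 (eqmod1 _) (epsilon_spec _ (fun m => H (y ^+ E * zpow a m)) (adjE y))).
exists (fun y => - deg y)%Z.
  move=> x y; suff -> : deg (x * y) = (deg x + deg y)%Z by lia.
  apply: (deg_uniq _ _ _ (proj2 (eqmod1 _) (degP (x * y)))); apply/eqmod1.
  rewrite zpowD eqmod_expgMn -mulgA (mulgA (y ^+ E)) (eqmodC (y ^+ E)) !mulgA.
  by rewrite degP mul1g degP; reflexivity.
have -> : deg a = (- Z.of_nat E)%Z.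
  apply: (deg_uniq _ _ _ (proj2 (eqmod1 _) (degP a))).
  by rewrite -zpow_nat -zpowD Z.add_opp_diag_r; apply: subgroup1.
by have /ltP := fact_gt0 (size reps); lia.
Qed.

End AbelianQuotient.

Lemma finite_index_or_zhom (G : groupType) (s : seq G) (H : G -> Prop) :
  is_subgroup H -> (forall x y : G, H (commg x y)) ->
  (forall x, generated (fun y => y \in s \/ H y) x) ->
  finite_index H \/ exists (psi : G -> Z) (x : G), zhom psi /\ psi x <> 0%Z.
Proof.
elim: s H => [|a s IHs] H H_sub H_comm H_gen.
  left; exists [:: 1] => x; exists 1; rewrite ?inE // invg1 mul1g.
  by apply: generated_min (H_gen x) => // s [].
have adj_comm x y : adjoin H a (commg x y) by exists 0%Z; rewrite mulg1.
have adj_gen x : generated (fun y => y \in s \/ adjoin H a y) x.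
  apply: generated_mono (H_gen x) => y [|Hy]; last by right; exists 0%Z; rewrite mulg1.
  rewrite inE => /orP [/eqP ->|]; last by left.
  by right; exists (Z.opp 1); rewrite zpowN zpow1 mulgV; apply: subgroup1.
have [adj_fin|] := IHs _ (adjoin_subgroup H_sub H_comm a) adj_comm adj_gen; last by right.
have [[m [m_neq0 Ham]]|a_free] := classic (exists m, m <> 0%Z /\ H (zpow a m)).
  left; apply: (finite_index_adjoin H_sub H_comm adj_fin (p := Z.to_nat (Z.abs m))).
    by apply/ltP; lia.
  rewrite -zpow_nat Z2Nat.id; last exact: Z.abs_nonneg.
  by case: (Z.abs_spec m) => [[_ ->]|[_ ->]] //; rewrite zpowN; apply: subgroupV.
right; have [|psi psiM psia] := zhom_of_adjoin H_sub H_comm adj_fin.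
  by move=> m Ham; apply: NNPP => m_neq0; apply: a_free; exists m.
by exists psi, a.
Qed.

Lemma zhom_onto (G : groupType) (psi : G -> Z) x :
  zhom psi -> psi x <> 0%Z ->
  exists (phi : G -> Z) (t : G), zhom phi /\ phi t = 1%Z.
Proof.
move=> psiM psix.
pose P n := (0 < n)%coq_nat /\ exists y, psi y = Z.of_nat n.
have [d [[[d_gt0 [t psit]] d_min] _]] :
    has_unique_least_element le P.
  apply: dec_inh_nat_subset_has_unique_least_element => [n|]; first exact: classic.
  exists (Z.to_nat (Z.abs (psi x))); split; first lia.
  case: (Z.abs_spec (psi x)) => [[? ->]|[? ->]]; first by exists x; lia.
  by exists x^-1; rewrite (zhomV psiM); lia.
have d_pos : (0 < Z.of_nat d)%Z by lia.
have psi_div y : psi y = (Z.of_nat d * (psi y / Z.of_nat d))%Z.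
  have [r_ge0 r_lt] := Z.mod_pos_bound (psi y) (Z.of_nat d) d_pos.
  have y_divmod := Z.div_mod (psi y) (Z.of_nat d) ltac:(lia).
  suff : (psi y mod Z.of_nat d = 0)%Z by lia.
  apply: NNPP => r_neq0.
  have /d_min : P (Z.to_nat (psi y mod Z.of_nat d)).
    split; first lia.
    exists (y * zpow t (- (psi y / Z.of_nat d))).
    by rewrite psiM (zhomZ psiM) psit Z2Nat.id; lia.
  lia.
exists (fun y => psi y / Z.of_nat d)%Z, t; split; last by rewrite psit Z.div_same; lia.
move=> y z; rewrite psiM {1}(psi_div y) {1}(psi_div z) -Z.mul_add_distr_l.
by rewrite Z.mul_comm Z.div_mul; lia.
Qed.

Lemma exists_zhom_onto (F : groupType) :
  finitely_generated F -> ~ finite_index (@derived F) ->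
  exists (psi : F -> Z) (t : F), zhom psi /\ psi t = 1%Z.
Proof.
move=> [s s_gen] F'_infinite.
have s_gen' x : generated (fun y => y \in s \/ derived y) x.
  by apply: generated_mono (s_gen x) => y; left.
have [//|[psi [x [psiM psix]]]] :=
  finite_index_or_zhom (derived_subgroup F) (@derived_commg F) s_gen'.
exact: zhom_onto psiM psix.
Qed.

(** * Counting along equivalence classes *)

Lemma bijective_of_inj_surj (A B : Type) (f : A -> B) :
  injective f -> (forall y, exists x, f x = y) -> bijective f.
Proof.
move=> f_inj f_surj.
have [g fgK] := choice (fun y x => f x = y) f_surj.
by exists g => [x|y]; [apply: f_inj; rewrite fgK|].
Qed.

Lemma card_divides_of_classes (A X : Type) (R : X -> X -> Prop) (D : X -> Type)
    (e : forall x, A * D x -> X) :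
  Equivalence R -> (forall x, injective (e x)) -> (forall x p, R x (e x p)) ->
  (forall x y, R x y -> exists p, e x p = y) -> card_divides A X.
Proof.
move=> R_equiv e_inj e_R e_onto.
pose rep x := epsilon (inhabits x) (R x).
have repR x : R x (rep x) by apply: epsilon_spec; exists x; reflexivity.
have rep_eq x y : R x y -> rep x = rep y.
  move=> Rxy; rewrite /rep; have -> : R x = R y.
    by apply: functional_extensionality => z; apply: propositional_extensionality; rewrite Rxy.
  by rewrite (proof_irrelevance _ (inhabits x) (inhabits y)).
exists {r : {x | rep x = x} & D (proj1_sig r)}.
exists (fun p => e (proj1_sig (projT1 p.2)) (p.1, projT2 p.2)).
apply: bijective_of_inj_surj.
  move=> [a1 [[r1 r1_rep] d1]] [a2 [[r2 r2_rep] d2]] /= e12.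
  have r12 : r1 = r2.
    rewrite -r1_rep -r2_rep; apply: rep_eq.
    transitivity (e r1 (a1, d1)); first exact: e_R.
    by rewrite e12; symmetry; apply: e_R.
  subst r2; rewrite (proof_irrelevance _ r1_rep r2_rep).
  by case: (e_inj _ _ _ e12) => -> ->.
move=> y; have rep_rep : rep (rep y) = rep y by symmetry; apply: rep_eq; apply: repR.
have [[a d] e_ad] := e_onto (rep y) y (symmetry (repR y)).
by exists (a, existT _ (exist _ (rep y) rep_rep) d).
Qed.

Section CosetRepresentatives.
Variables (G : groupType) (B S : G -> Prop).
Hypothesis B_sub : is_subgroup B.

Definition crep (x : G) := epsilon (inhabits 1) (fun r => S r /\ B (x * r^-1)).

Lemma crep_spec x : S x -> S (crep x) /\ B (x * (crep x)^-1).
Proof.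
move=> Sx; rewrite /crep; apply: (epsilon_spec _ (fun r => S r /\ B (x * r^-1))).
by exists x; rewrite mulgV; split; last apply: subgroup1.
Qed.

Lemma crep_eq x y : B (x * y^-1) -> crep x = crep y.
Proof.
move=> Bxy; rewrite /crep; congr (epsilon _ _).
apply: functional_extensionality => r; apply: propositional_extensionality.
split=> -[Sr Br]; split=> //.
  by have := subgroupM B_sub (subgroupV B_sub Bxy) Br; rewrite invgM invgK mulgA mulgVK.
by have := subgroupM B_sub Bxy Br; rewrite mulgA mulgVK.
Qed.

Lemma crep_idem x : S x -> crep (crep x) = crep x.
Proof.
move=> Sx; apply: crep_eq; have [_ /(subgroupV B_sub)] := crep_spec Sx.
by rewrite invgM invgK.
Qed.

End CosetRepresentatives.

Arguments crep_spec {G B} S B_sub {x}.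
Arguments crep_eq {G B} S B_sub {x y}.
Arguments crep_idem {G B} S B_sub {x}.

(** * Twisted and conjugated surjections *)

Section Twisting.
Variables (F G : groupType) (psi : F -> Z) (t : F).
Hypotheses (psiM : zhom psi) (psit : psi t = 1%Z).

(* [kimg f] is N = f(ker psi) and [kcenter f] is its centre Z(N). *)
Definition surj_morph (f : F -> G) := monoid_morphism f /\ forall y, exists x, f x = y.
Definition kimg (f : F -> G) (y : G) := exists k, psi k = 0%Z /\ f k = y.
Definition kcent (f : F -> G) (z : G) := forall w, kimg f w -> commute z w.
Definition kcenter (f : F -> G) (z : G) := kimg f z /\ kcent f z.

Lemma psi_ker_part x : psi (x * zpow t (- psi x)) = 0%Z.
Proof. by rewrite psiM (zhomZ psiM) psit; lia. Qed.

Lemma mmorph_eq_ker_t (f1 f2 : F -> G) :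
  monoid_morphism f1 -> monoid_morphism f2 ->
  (forall k, psi k = 0%Z -> f1 k = f2 k) -> f1 t = f2 t -> f1 = f2.
Proof.
move=> f1_morph f2_morph eq_ker eq_t; apply: functional_extensionality => x.
have -> : x = x * zpow t (- psi x) * zpow t (psi x) by rewrite zpowN mulgVK.
rewrite (mmorphM f1_morph) (mmorphM f2_morph) (mmorphZ f1_morph) (mmorphZ f2_morph).
by rewrite eq_t eq_ker // psi_ker_part.
Qed.

Definition cj (a : G) (h : F -> G) x := h x ^ a.

Lemma cjM a b h : cj (a * b) h = cj b (cj a h).
Proof. by apply: functional_extensionality => x; rewrite /cj conjgM. Qed.

Lemma cj_surj a h : surj_morph h -> surj_morph (cj a h).
Proof.
move=> [h_morph h_onto]; split.
  by split=> [|x y]; rewrite /cj ?(mmorph1 h_morph) ?(mmorphM h_morph) ?conj1g ?conjMg.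
by move=> y; have [x hx] := h_onto (y ^ a^-1); exists x; rewrite /cj hx conjgKV.
Qed.

Section OneMorphism.
Variable f : F -> G.
Hypothesis f_surj : surj_morph f.
Let f_morph := f_surj.1.
Local Notation g := (f t).

Lemma kimg1 : kimg f 1.
Proof. by exists 1; rewrite zhom1 // (mmorph1 f_morph). Qed.

Lemma kimgM y1 y2 : kimg f y1 -> kimg f y2 -> kimg f (y1 * y2).
Proof.
move=> [k1 [k1K <-]] [k2 [k2K <-]].
by exists (k1 * k2); rewrite psiM k1K k2K (mmorphM f_morph).
Qed.

Lemma kimgV y : kimg f y -> kimg f y^-1.
Proof. by move=> [k [kK <-]]; exists k^-1; rewrite zhomV // kK (mmorphV f_morph). Qed.

Lemma kimgJ y w : kimg f y -> kimg f (y ^ w).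
Proof.
move=> [k [kK <-]]; have [x <-] := f_surj.2 w.
by exists (k ^ x); rewrite zhomJ // (mmorphJ f_morph).
Qed.

Lemma kimg_subgroup : is_subgroup (kimg f).
Proof. by split; [exact: kimg1|exact: kimgM|exact: kimgV]. Qed.

Lemma kimg_derived y : derived y -> kimg f y.
Proof.
apply: generated_min kimg_subgroup _ => _ [y1 [y2 ->]].
have [x1 <-] := f_surj.2 y1; have [x2 <-] := f_surj.2 y2.
exists (commg x1 x2); split; last exact: mmorphR.
by rewrite /commg psiM zhomV // zhomJ //; lia.
Qed.

Lemma kcent1 : kcent f 1.
Proof. by move=> w _; rewrite /commute mul1g mulg1. Qed.

Lemma kcentM a b : kcent f a -> kcent f b -> kcent f (a * b).
Proof.
by move=> a_cent b_cent w w_in; apply/commute_sym/commuteM; apply/commute_sym;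
  [apply: a_cent|apply: b_cent].
Qed.

Lemma kcentV a : kcent f a -> kcent f a^-1.
Proof. by move=> a_cent w /a_cent/commute_sym/commuteV/commute_sym. Qed.

Lemma kcentJ a y : kcent f a -> kcent f (a ^ y).
Proof.
move=> a_cent w w_in; rewrite /commute -(conjgKV y w) -!conjMg a_cent //.
exact: kimgJ.
Qed.

Lemma kcenter_subgroup : is_subgroup (kcenter f).
Proof.
split; first by split; [exact: kimg1|exact: kcent1].
  by move=> x y [] ? ? [] ? ?; split; [exact: kimgM|exact: kcentM].
by move=> x [] ? ?; split; [exact: kimgV|exact: kcentV].
Qed.

Definition twist_cocycle (z : G) (n : Z) := zpow g (- n) * zpow (g * z) n.

Lemma twist_cocycle_kcent z n : kcenter f z -> kcent f (twist_cocycle z n).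
Proof.
move=> [_ z_cent]; induction n using Z.peano_ind.
- by rewrite /twist_cocycle Z.opp_0 !zpow0 mulg1; exact: kcent1.
- have -> : twist_cocycle z (Z.succ n) = twist_cocycle z n ^ g * z.
    rewrite /twist_cocycle Z.opp_succ -Z.sub_1_r -Z.add_opp_r zpowD zpowS.
    by rewrite (zpowC g (- n)) (zpowN g 1) zpow1 /conjg !mulgA.
  by apply: kcentM => //; apply: kcentJ.
- have -> : twist_cocycle z (Z.pred n) = (twist_cocycle z n * z^-1) ^ g^-1.
    rewrite /twist_cocycle Z.opp_pred -Z.add_1_r zpowD (zpowC g (- n)) zpow_pred zpow1.
    by rewrite /conjg invgK invgM !mulgA.
  by apply/kcentJ/kcentM => //; apply: kcentV.
Qed.

Definition twist (z : G) (x : F) := f x * twist_cocycle z (psi x).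

Lemma twist_ker z k : psi k = 0%Z -> twist z k = f k.
Proof. by move=> kK; rewrite /twist kK /twist_cocycle Z.opp_0 !zpow0 !mulg1. Qed.

Lemma twist_t z : twist z t = g * z.
Proof. by rewrite /twist psit /twist_cocycle zpowN !zpow1 mulgA mulgV mul1g. Qed.

Lemma twist_morph z : kcenter f z -> monoid_morphism (twist z).
Proof.
move=> z_center; split.
  by rewrite twist_ker ?zhom1 // (mmorph1 f_morph).
move=> x y; rewrite /twist psiM (mmorphM f_morph).
have -> : twist_cocycle z (psi x + psi y) =
    zpow g (- psi y) * twist_cocycle z (psi x) * zpow (g * z) (psi y).
  by rewrite /twist_cocycle Z.opp_add_distr !zpowD !mulgA (zpowC g).
have y_ker : kimg f (f y * zpow g (- psi y)).
  exists (y * zpow t (- psi y)); split; first exact: psi_ker_part.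
  by rewrite (mmorphM f_morph) (mmorphZ f_morph).
set U := twist_cocycle z (psi x); set W := f y * zpow g (- psi y).
have -> : f x * f y * (zpow g (- psi y) * U * zpow (g * z) (psi y)) =
    f x * (W * U) * zpow (g * z) (psi y) by rewrite !mulgA.
by rewrite -(twist_cocycle_kcent (psi x) z_center y_ker) /W /twist_cocycle !mulgA.
Qed.

Lemma twist_surj z : kcenter f z -> surj_morph (twist z).
Proof.
move=> z_center; have tw_morph := twist_morph z_center; split=> // y.
have [[kz [kzK kz_z]] _] := z_center; have [x <-] := f_surj.2 y.
exists (x * zpow t (- psi x) * zpow (t * kz^-1) (psi x)).
rewrite (mmorphM tw_morph) (mmorphZ tw_morph) (mmorphM tw_morph t) (mmorphV tw_morph).
rewrite twist_t !twist_ker ?psi_ker_part // kz_z mulgK.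
by rewrite (mmorphM f_morph) (mmorphZ f_morph) zpowN mulgVK.
Qed.

Lemma agree_ker_kcent h w :
  monoid_morphism h -> (forall k, psi k = 0%Z -> h k = f k) -> h t = g * w ->
  kcent f w.
Proof.
move=> h_morph h_ker h_t _ [k [kK <-]].
have := h_ker (k ^ t^-1) ltac:(by rewrite zhomJ).
rewrite !(mmorphJ h_morph) !(mmorphJ f_morph) (mmorphV h_morph) (mmorphV f_morph).
rewrite h_ker // h_t /conjg !invgK invgM !mulgA => /(mulIg g^-1).
rewrite -!mulgA => /(mulgI g) w_fix.
by rewrite /commute -{2}w_fix -mulgA mulgVK.
Qed.

Lemma agree_ker_twist h w :
  monoid_morphism h -> (forall k, psi k = 0%Z -> h k = f k) -> h t = g * w ->
  kimg f w -> kcenter f w /\ h = twist w.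
Proof.
move=> h_morph h_ker h_t w_in.
have w_center : kcenter f w by split; last exact: agree_ker_kcent h_morph h_ker h_t.
split=> //; apply: mmorph_eq_ker_t h_morph (twist_morph w_center) _ _.
  by move=> k kK; rewrite twist_ker // h_ker.
by rewrite twist_t.
Qed.

Lemma cj_twist_kcenter a z :
  kcenter f a -> kcenter f z ->
  kcenter f (g^-1 * (g * z) ^ a) /\ cj a (twist z) = twist (g^-1 * (g * z) ^ a).
Proof.
move=> [a_in a_cent] z_center.
apply: agree_ker_twist.
- exact: (cj_surj a (twist_surj z_center)).1.
- move=> k kK; rewrite /cj twist_ker // /conjg -a_cent ?mulKg //.
  by exists k.
- by rewrite /cj twist_t mulVKg.
- have -> : g^-1 * (g * z) ^ a = a^-1 ^ g * (z * a) by rewrite /conjg !mulgA.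
  apply: kimgM; first exact/kimgJ/kimgV.
  exact: kimgM z_center.1 a_in.
Qed.

End OneMorphism.

Definition twist_rel (f f' : F -> G) := exists n m, [/\ kimg f n, kimg f m,
  forall k, psi k = 0%Z -> f' k = f k ^ n & f' t = m * f t].

Section TwistRelation.
Variables f f' f'' : F -> G.
Hypothesis f_surj : surj_morph f.

Lemma twist_rel_kimg : twist_rel f f' -> forall y, kimg f' y <-> kimg f y.
Proof.
move=> [n [m [n_in _ f'_ker _]]] y; split=> -[k [kK <-]].
  by rewrite f'_ker //; apply: kimgJ => //; exists k.
have [|k' [k'K fk']] := kimgJ f_surj n^-1 (y := f k); first by exists k.
by exists k'; rewrite f'_ker // fk' conjgKV.
Qed.

Lemma twist_rel_refl : twist_rel f f.
Proof.
exists 1, 1; split; try exact: kimg1.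
  by move=> k _; rewrite conjg1.
by rewrite mul1g.
Qed.

Lemma twist_rel_sym : twist_rel f f' -> twist_rel f' f.
Proof.
move=> rel; have kimgE := twist_rel_kimg rel.
move: rel => [n [m [n_in m_in f'_ker f'_t]]].
exists n^-1, m^-1; split; try by apply/kimgE/kimgV.
  by move=> k kK; rewrite f'_ker // conjgK.
by rewrite f'_t mulKg.
Qed.

Lemma twist_rel_trans : twist_rel f f' -> twist_rel f' f'' -> twist_rel f f''.
Proof.
move=> rel; have kimgE := twist_rel_kimg rel.
move: rel => [n [m [n_in m_in f'_ker f'_t]]] [n' [m' [n'_in m'_in f''_ker f''_t]]].
exists (n * n'), (m' * m); split; try by apply: kimgM => //; apply/kimgE.
  by move=> k kK; rewrite f''_ker // f'_ker // conjgM.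
by rewrite f''_t f'_t mulgA.
Qed.

End TwistRelation.

Section ClassParametrization.
Variable f : F -> G.
Hypothesis f_surj : surj_morph f.
Local Notation g := (f t).
Local Notation crepZ := (crep (kcenter f) (kimg f)).

Lemma twist_rel_cj_twist r z :
  kimg f r -> kcenter f z -> twist_rel f (cj r (twist f z)).
Proof.
move=> r_in z_center; exists r, (r^-1 * (z * r) ^ g^-1); split=> //.
- apply: (kimgM f_surj (kimgV f_surj r_in)); apply: (kimgJ f_surj).
  by apply: (kimgM f_surj) => //; case: z_center.
- by move=> k kK; rewrite /cj twist_ker.
- by rewrite /cj twist_t // /conjg invgK !mulgA mulgVK.
Qed.

Lemma cj_twist_of_rel f' : surj_morph f' -> twist_rel f f' ->
  exists n z, [/\ kimg f n, kcenter f z & f' = cj n (twist f z)].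
Proof.
move=> f'_surj [n [m [n_in m_in f'_ker f'_t]]].
pose w := (n * m) ^ g * n^-1.
have h_t : cj n^-1 f' t = g * w by rewrite /cj f'_t /w /conjg invgK !mulgA mulgV mul1g.
have h_ker k : psi k = 0%Z -> cj n^-1 f' k = f k by move=> kK; rewrite /cj f'_ker // conjgK.
have w_in : kimg f w.
  by apply: (kimgM f_surj); [apply/(kimgJ f_surj)/(kimgM f_surj)|apply: (kimgV f_surj)].
have [w_center h_eq] := agree_ker_twist f_surj (cj_surj n^-1 f'_surj).1 h_ker h_t w_in.
exists n, w; split=> //.
by rewrite -h_eq -cjM mulVg; apply: functional_extensionality => x; rewrite /cj conjg1.
Qed.

Lemma cj_twist_eq_kcenter r1 r2 z1 z2 : kimg f r1 -> kimg f r2 ->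
  cj r1 (twist f z1) = cj r2 (twist f z2) -> kcenter f (r2 * r1^-1).
Proof.
move=> r1_in r2_in eq12; split; first by apply: kimgM => //; apply: kimgV.
move=> _ [k [kK <-]]; apply/commute_sym/commgP; rewrite -conjg_fix; apply/eqP.
have := congr1 (fun h => h k) eq12; rewrite /cj !twist_ker // => eq_k.
by rewrite conjgM -eq_k conjgK.
Qed.

Lemma cj_twist_injr r z1 z2 : cj r (twist f z1) = cj r (twist f z2) -> z1 = z2.
Proof. by move=> /(congr1 (fun h => h t)); rewrite /cj !twist_t // => /conjg_inj/mulgI. Qed.

Definition class_param (n : G) := cj (crepZ n) (twist f (n * (crepZ n)^-1)).

Lemma crepZ_spec n : kimg f n -> kimg f (crepZ n) /\ kcenter f (n * (crepZ n)^-1).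
Proof. exact: (crep_spec (kimg f) (kcenter_subgroup f_surj) (x := n)). Qed.

Lemma class_param_surj n : kimg f n -> surj_morph (class_param n).
Proof. by move=> /crepZ_spec [_ z_center]; apply/cj_surj/twist_surj. Qed.

Lemma class_param_rel n : kimg f n -> twist_rel f (class_param n).
Proof. by move=> /crepZ_spec [r_in z_center]; apply: twist_rel_cj_twist. Qed.

Lemma class_param_inj n1 n2 :
  kimg f n1 -> kimg f n2 -> class_param n1 = class_param n2 -> n1 = n2.
Proof.
move=> n1_in n2_in eq12.
have [r1_in _] := crepZ_spec n1_in; have [r2_in _] := crepZ_spec n2_in.
have r12 : crepZ n1 = crepZ n2.
  rewrite -(crep_idem (kimg f) (kcenter_subgroup f_surj) n1_in).
  rewrite -(crep_idem (kimg f) (kcenter_subgroup f_surj) n2_in).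
  apply: (crep_eq (kimg f) (kcenter_subgroup f_surj)).
  have /(subgroupV (kcenter_subgroup f_surj)) := cj_twist_eq_kcenter r1_in r2_in eq12.
  by rewrite invgM invgK.
by move: eq12; rewrite /class_param r12 => /cj_twist_injr/mulIg.
Qed.

Lemma class_param_onto f' : surj_morph f' -> twist_rel f f' ->
  exists2 n, kimg f n & class_param n = f'.
Proof.
move=> f'_surj /(cj_twist_of_rel f'_surj) [n [z [n_in z_center ->]]].
have [r_in a_center] := crepZ_spec n_in.
set r := crepZ n in r_in a_center; set a := n * r^-1 in a_center.
have [z'_center cj_a] := cj_twist_kcenter f_surj a_center z_center.
set z' := _ * _ in z'_center cj_a.
have n'_in : kimg f (z' * r) by apply: (kimgM f_surj) => //; case: z'_center.
have r'_eq : crepZ (z' * r) = r.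
  rewrite (crep_eq (kimg f) (kcenter_subgroup f_surj) (y := r)) ?mulgK //.
  exact: (crep_idem (kimg f) (kcenter_subgroup f_surj) n_in).
exists (z' * r) => //.
by rewrite /class_param r'_eq mulgK -cj_a -cjM /a mulgVK.
Qed.

End ClassParametrization.

End Twisting.

Section SurjectionClasses.
Variables (F G : groupType) (psi : F -> Z) (t : F).
Hypotheses (psiM : zhom psi) (psit : psi t = 1%Z).

Local Notation kimgS f := (kimg psi (proj1_sig f)).
Local Notation crepD f := (crep (@derived G) (kimgS f)).

Definition surj_rel (f f' : SurjHom F G) := twist_rel psi t (proj1_sig f) (proj1_sig f').

Lemma surj_rel_equiv : Equivalence surj_rel.
Proof.
split=> [f|f f'|f f' f''].
- exact: twist_rel_refl (proj2_sig f).
- exact: twist_rel_sym (proj2_sig f).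
- exact: twist_rel_trans (proj2_sig f).
Qed.

Definition class_reps (f : SurjHom F G) := {r : G | kimgS f r /\ crepD f r = r}.

Lemma class_embed_kimg f (p : DerivedSet G * class_reps f) :
  kimgS f (proj1_sig p.1 * proj1_sig p.2).
Proof.
apply: (kimgM psiM (proj2_sig f)); last exact: (proj2_sig p.2).1.
exact: (kimg_derived psiM (proj2_sig f) (proj2_sig p.1)).
Qed.

Definition class_embed f (p : DerivedSet G * class_reps f) : SurjHom F G :=
  exist _ _ (class_param_surj psiM psit (proj2_sig f) (class_embed_kimg p)).

Lemma class_embed_rel f (p : DerivedSet G * class_reps f) : surj_rel f (class_embed p).
Proof. exact: (class_param_rel psiM psit (proj2_sig f) (class_embed_kimg p)). Qed.

Lemma class_embed_inj f : injective (@class_embed f).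
Proof.
move=> p1 p2 /(congr1 (@proj1_sig _ _)).
move/(class_param_inj psiM psit (proj2_sig f) (class_embed_kimg p1) (class_embed_kimg p2)).
case: p1 p2 => [[c1 c1_in] [d1 [d1_in d1_rep]]] [[c2 c2_in] [d2 [d2_in d2_rep]]] /= cd12.
have crepD_mul c d : derived c -> crepD f (c * d) = crepD f d.
  by move=> c_in; apply: (crep_eq (kimgS f) (derived_subgroup G)); rewrite mulgK.
have d12 : d1 = d2.
  by rewrite -d1_rep -d2_rep -(crepD_mul c1 d1 c1_in) -(crepD_mul c2 d2 c2_in) cd12.
subst d2; have c12 : c1 = c2 by apply: (mulIg d1).
subst c2; congr (_, _); first exact: subset_eq_compat.
exact: subset_eq_compat.
Qed.

Lemma class_embed_onto f f' :
  surj_rel f f' -> exists p : DerivedSet G * class_reps f, class_embed p = f'.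
Proof.
move=> /(class_param_onto psiM psit (proj2_sig f) (proj2_sig f')) [n n_in n_f'].
have [d_in c_in] := crep_spec (kimgS f) (derived_subgroup G) n_in.
have d_rep : crepD f (crepD f n) = crepD f n := crep_idem (kimgS f) (derived_subgroup G) n_in.
exists (exist _ _ c_in, (exist _ _ (conj d_in d_rep) : class_reps f)).
case: f' n_f' => f' f'_surj /= n_f'; apply: subset_eq_compat.
by rewrite /= mulgVK.
Qed.

End SurjectionClasses.

Theorem mainTheorem4 (F G : groupType) :
  finitely_generated F ->
  ~ finite_index (@derived F) ->
  card_divides (DerivedSet G) (SurjHom F G).
Proof.
move=> F_fg F'_infinite.
have [psi [t [psiM psit]]] := exists_zhom_onto F_fg F'_infinite.
apply: (card_divides_of_classes (e := class_embed psiM psit) (surj_rel_equiv G t psiM)).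
- exact: class_embed_inj.
- exact: class_embed_rel.
- exact: class_embed_onto.
Qed.
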